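(* Let $n\ge1$. Then $$\min_{1\le i\le n} s\big([(10)^i0(10)^{n-i}]_2\big)=F_{2n+1}+F_{2n-1}.$$
   Context: Stern's sequence $(a(n))_{n\ge0}$: $a(0)=0$, $a(1)=1$, $a(2n)=a(n)$, $a(2n+1)=a(n)+a(n+1)$; $s(n)=a(n+1)$. For a binary string $x$, $[x]_2$ is the integer it represents in base 2; $x^i$ denotes $i$-fold concatenation ($x^0$ empty). $F_n$ are the Fibonacci numbers ($F_0=0,F_1=1,F_n=F_{n-1}+F_{n-2}$). *)

From mathcomp Require Import all_boot.
Set Implicit Arguments. Unset Strict Implicit. Unset Printing Implicit Defensive.

(* Stern's diatomic sequence a(n), computed with fuel (fuel n suffices,
   since the recursive arguments n./2 and n./2 + 1 are < n for n >= 2). *)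
Fixpoint stern_fuel (fuel n : nat) : nat :=
  match fuel with
  | 0 => 0
  | k.+1 =>
      if n <= 1 then n
      else if odd n then stern_fuel k n./2 + stern_fuel k n./2.+1
      else stern_fuel k n./2
  end.

Definition stern (n : nat) : nat := stern_fuel n n.

Definition stern_s (n : nat) : nat := stern n.+1.

(* binary strings: seq bool, most significant bit first; true = 1 *)
Definition bin_val (x : seq bool) : nat := foldl (fun (acc : nat) (b : bool) => acc.*2 + nat_of_bool b) 0 x.

Definition srep (i : nat) (x : seq bool) : seq bool := flatten (nseq i x).

Fixpoint fib (n : nat) : nat :=
  match n with
  | 0 => 0
  | 1 => 1
  | (m.+1 as k).+1 => fib k + fib m
  end.

Definition word (n i : nat) : seq bool :=
  srep i [:: true; false] ++ [:: false] ++ srep (n - i) [:: true; false].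

Example stern_check : map stern (iota 0 10) = [:: 0; 1; 1; 2; 1; 3; 2; 3; 1; 4]. Proof. by []. Qed.
Example word_check : bin_val (word 2 1) = 18. Proof. by []. Qed.
Example fib_check : fib 5 = 5. Proof. by []. Qed.

From mathcomp Require Import all_boot.
From mathcomp Require Import zify.

(* Reading a binary word left to right, the pair (a(m), a(m+1)) evolves linearly:
   appending 1 maps (p, q) to (p + q, q), appending 0 maps it to (p, p + q).
   The block 10 therefore acts through Fibonacci numbers of even/odd index, and
   the word (10)^i 0 (10)^k yields s = F_{2i} F_{2k+2} + F_{2i+1} F_{2k+1}.
   By the addition formula this equals F_{2n+2} - F_{2i-1} F_{2k} for i >= 1,
   and F_{2i-1} F_{2k} <= F_{2i+2k-2} = F_{2n-2}, with equality at i = 1;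
   finally F_{2n+2} - F_{2n-2} = F_{2n+1} + F_{2n-1}. *)

Lemma stern_fuel_indep f g n : n <= f -> n <= g -> stern_fuel f n = stern_fuel g n.
Proof.
elim: f g n => [|f IH] [|g] n /= le_nf le_ng //; try by have -> : n = 0 by lia.
case: ifP => // n_gt1.
have := odd_double_half n; rewrite -muln2.
by case: (odd n) => /= n_eq; rewrite (IH g n./2) ?(IH g n./2.+1) //; lia.
Qed.

Lemma stern_fuelS f n : stern_fuel f.+1 n =
  if n <= 1 then n
  else if odd n then stern_fuel f n./2 + stern_fuel f n./2.+1 else stern_fuel f n./2.
Proof. by []. Qed.

Lemma stern_fuel_stern f n : n <= f -> stern_fuel f n = stern n.
Proof. by move=> le_nf; apply: stern_fuel_indep. Qed.

Lemma stern_rec n : 1 < n ->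
  stern n = if odd n then stern n./2 + stern n./2.+1 else stern n./2.
Proof.
case: n => [//|k] k_gt1; rewrite [in LHS]/stern stern_fuelS ifN -?ltnNge //.
have := odd_double_half k.+1; rewrite -muln2.
by case: (odd k.+1) => n_eq; rewrite !stern_fuel_stern //; lia.
Qed.

Lemma stern_double m : stern m.*2 = stern m.
Proof. by case: m => [|m] //; rewrite stern_rec ?odd_double ?doubleK. Qed.

Lemma stern_doubleS m : stern m.*2.+1 = stern m + stern m.+1.
Proof. by case: m => [|m] //; rewrite stern_rec //= odd_double uphalf_double. Qed.

Definition stern_pair (m : nat) : nat * nat := (stern m, stern m.+1).

Definition stern_step (pq : nat * nat) (b : bool) : nat * nat :=
  if b then (pq.1 + pq.2, pq.2) else (pq.1, pq.1 + pq.2).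

Lemma bin_val_rcons x b : bin_val (rcons x b) = (bin_val x).*2 + b.
Proof. by rewrite /bin_val -cats1 foldl_cat. Qed.

Lemma stern_pair_rcons x b :
  stern_pair (bin_val (rcons x b)) = stern_step (stern_pair (bin_val x)) b.
Proof.
rewrite bin_val_rcons /stern_pair /stern_step.
by case: b; rewrite /= ?addn1 ?addn0 stern_doubleS -?doubleS ?stern_double.
Qed.

Lemma stern_pair_bin_val w : stern_pair (bin_val w) = foldl stern_step (0, 1) w.
Proof.
elim/last_ind: w => [|w b IHw] //.
by rewrite stern_pair_rcons IHw -cats1 foldl_cat.
Qed.

Lemma fibSS n : fib n.+2 = fib n.+1 + fib n.
Proof. by []. Qed.

Lemma fib_add a b : fib (a + b).+1 = fib a.+1 * fib b.+1 + fib a * fib b.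
Proof.
elim: a b => [|a IHa] b; first by rewrite /= mul1n mul0n addn0.
by rewrite addSnnS IHa !fibSS; nia.
Qed.

Lemma fib_mul_le a b : fib a.+1 * fib b <= fib (a + b).
Proof.
case: b => [|b]; first by rewrite muln0.
by rewrite addnS fib_add leq_addr.
Qed.

Lemma srepS k x : srep k.+1 x = x ++ srep k x.
Proof. by []. Qed.

Lemma foldl_stern_step_srep k p r :
  foldl stern_step (p, p + r) (srep k [:: true; false]) =
  (p * fib k.*2.+1 + r * fib k.*2, p * fib k.*2.+2 + r * fib k.*2.+1).
Proof.
elim: k p r => [|k IHk] p r; first by congr pair => /=; lia.
rewrite srepS foldl_cat [foldl _ _ [:: _; _]]/= IHk doubleS !fibSS.
by congr pair; nia.
Qed.

Lemma stern_s_word i k :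
  stern_s (bin_val (word (i + k) i)) = fib i.*2 * fib k.*2.+2 + fib i.*2.+1 * fib k.*2.+1.
Proof.
rewrite /stern_s -[stern _]/((stern_pair _).2) stern_pair_bin_val /word addKn !foldl_cat.
rewrite -[(0, 1)]/(0, 0 + 1) foldl_stern_step_srep !mul0n !mul1n !add0n /=.
by rewrite foldl_stern_step_srep.
Qed.

Lemma stern_s_word_add i k : 0 < i ->
  stern_s (bin_val (word (i + k) i)) + fib i.*2.-1 * fib k.*2 = fib (i + k).*2.+2.
Proof.
case: i => [|j] // _; rewrite stern_s_word.
have -> : (j.+1 + k).*2.+2 = (j.*2.+2 + k.*2.+1).+1 by rewrite -!muln2; lia.
by rewrite fib_add doubleS [_.+2.-1]/= !fibSS; nia.
Qed.

Lemma fib_double_lucas n : 0 < n ->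
  fib n.*2.+1 + fib n.*2.-1 + fib n.-1.*2 = fib n.*2.+2.
Proof. by case: n => [|m] // _; rewrite doubleS [_.+2.-1]/= [m.+1.-1]/= !fibSS; lia. Qed.

Theorem mainTheorem11 (n : nat) : 1 <= n ->
  (exists2 i, 1 <= i <= n & stern_s (bin_val (word n i)) = fib n.*2.+1 + fib n.*2.-1) /\
  (forall i, 1 <= i <= n -> fib n.*2.+1 + fib n.*2.-1 <= stern_s (bin_val (word n i))).
Proof.
move=> n_gt0; have lucas := @fib_double_lucas n n_gt0.
have value i : 1 <= i <= n ->
    stern_s (bin_val (word n i)) + fib i.*2.-1 * fib (n - i).*2 = fib n.*2.+2.
  by case/andP=> i_gt0 le_in; rewrite -{1 3}(subnKC le_in) stern_s_word_add.
split.
- exists 1; first by rewrite leqnn n_gt0.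
  by have := value 1; rewrite leqnn n_gt0 subn1 mul1n; lia.
- move=> i i_range; have := value i i_range.
  have := fib_mul_le i.*2.-2 (n - i).*2.
  case/andP: i_range => i_gt0 le_in.
  have -> : i.*2.-2.+1 = i.*2.-1 by rewrite -muln2; lia.
  have -> : i.*2.-2 + (n - i).*2 = n.-1.*2 by rewrite -!muln2; lia.
  lia.
Qed.
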